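(* Let $q\ge2$ be a prime power and let $f\in\mathbb{F}_q[x]$ be nonzero. If $m\ge 1$ is an integer with $q^m\ge \deg f$, then $$E(f)\le \prod_{\deg p\le m}\left(1+\frac{1}{|p|}\right),$$ where the product runs over all monic irreducible polynomials $p\in\mathbb{F}_q[x]$ of degree at most $m$.
   Context: For $f\in\mathbb{F}_q[x]$, $|f|=q^{\deg f}$. The letter $p$ always denotes a monic irreducible polynomial in $\mathbb{F}_q[x]$, and $E(f)=\prod_{p\mid f}\left(1+\frac{1}{|p|}\right)$, the product over monic irreducible divisors $p$ of $f$. *)

From HB Require Import structures.
From mathcomp Require Import all_boot all_order all_algebra all_field.
From mathcomp Require Import boolp classical_sets fsbigop reals.
Set Implicit Arguments. Unset Strict Implicit. Unset Printing Implicit Defensive.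
Import Order.TTheory GRing.Theory Num.Theory.
Local Open Scope ring_scope.
Local Open Scope classical_set_scope.

Definition pnorm (F : finFieldType) (p : {poly F}) : nat := (#|F| ^ (size p).-1)%N.

Definition efac (R : realType) (F : finFieldType) (p : {poly F}) : R :=
  1 + ((pnorm p)%:R)^-1.

Definition monic_irr (F : finFieldType) : set {poly F} :=
  [set p | p \is monic /\ irreducible_poly p].

Definition E (R : realType) (F : finFieldType) (f : {poly F}) : R :=
  \big[*%R/1]_(p \in [set p | monic_irr p /\ p %| f]) efac R p.

Definition Pm (R : realType) (F : finFieldType) (m : nat) : R :=
  \big[*%R/1]_(p \in [set p : {poly F} | monic_irr p /\ ((size p).-1 <= m)%N]) efac R p.

From HB Require Import structures.
From mathcomp Require Import all_boot all_order all_algebra all_field.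
From mathcomp Require Import boolp classical_sets fsbigop reals.
Set Implicit Arguments. Unset Strict Implicit. Unset Printing Implicit Defensive.
Import Order.TTheory GRing.Theory Num.Theory.
Local Open Scope ring_scope.

(* Split both products according to the two conditions [p | f] and
   [deg p <= m]; the factors satisfying both are common and cancel.  The
   primes dividing f have total degree at most deg f <= q^m, whereas the
   primes of degree at most m have total degree at least q^m, because their
   product is divisible by the squarefree polynomial X^(q^m) - X, all of whose
   irreducible factors have degree at most m.  Comparing the two degree sums,
   the k primes dividing f of degree > m and the l primes of degree <= m not
   dividing f satisfy k (m + 1) <= l m, hence k <= l.  Each factor of the
   first kind is at most 1 + q^-m and each factor of the second kind is at
   least 1 + q^-m, so the remaining products compare as well. *)

Lemma leq_predLR n m : (n.-1 <= m)%N = (n <= m.+1)%N.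
Proof. by rewrite leqNgt ltn_predRL -leqNgt. Qed.

Lemma sum_nat_const_seq (T : Type) (r : seq T) (P : pred T) (c : nat) :
  (\sum_(i <- r | P i) c)%N = (count P r * c)%N.
Proof. by rewrite big_const_seq iter_addn_0 mulnC. Qed.

Lemma count_large_le_count_small (T : Type) (r : seq T) (deg : T -> nat)
    (P : pred T) (m N : nat) : (0 < m)%N ->
  (\sum_(i <- r | P i) deg i <= N)%N ->
  (N <= \sum_(i <- r | deg i <= m) deg i)%N ->
  (count (fun i => P i && ~~ (deg i <= m)) r <=
   count (fun i => (deg i <= m) && ~~ P i) r)%N.
Proof.
move=> m_gt0 sumP sumS.
set kL := count _ r; set kS := count _ r.
have lowL : (kL * m.+1 <= \sum_(i <- r | P i && ~~ (deg i <= m)) deg i)%N.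
  by rewrite -sum_nat_const_seq; apply: leq_sum => i /andP[_]; rewrite ltnNge.
have upS : (\sum_(i <- r | (deg i <= m) && ~~ P i) deg i <= kS * m)%N.
  by rewrite -sum_nat_const_seq; apply: leq_sum => i /andP[].
rewrite (bigID (fun i => deg i <= m)%N) /= in sumP.
rewrite (bigID P) /= in sumS.
rewrite (eq_bigl (fun i => P i && (deg i <= m)%N)) in sumS; last first.
  by move=> i; rewrite andbC.
have : (kL * m <= kS * m)%N.
  apply: leq_trans (leq_mul (leqnn kL) (leqnSn m)) _.
  apply: leq_trans lowL _; apply: leq_trans _ upS.
  rewrite -(leq_add2l (\sum_(i <- r | P i && (deg i <= m)%N) deg i)).
  exact: leq_trans sumP sumS.
by rewrite leq_pmul2r.
Qed.

Lemma ler_prod_split (R : numDomainType) (T : Type) (r : seq T) (G : T -> R)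
    (P Q : pred T) (c : R) : 1 <= c -> (forall i, 0 <= G i) ->
  (count (fun i => P i && ~~ Q i) r <= count (fun i => Q i && ~~ P i) r)%N ->
  (forall i, P i -> ~~ Q i -> G i <= c) -> (forall i, Q i -> ~~ P i -> c <= G i) ->
  \prod_(i <- r | P i) G i <= \prod_(i <- r | Q i) G i.
Proof.
move=> c_ge1 G_ge0 leLS GL GS.
have c_ge0 : 0 <= c := le_trans ler01 c_ge1.
rewrite (bigID Q) [X in _ <= X](bigID P) /=.
rewrite [\prod_(i <- r | Q i && P i) _](eq_bigl (fun i => P i && Q i)); last first.
  by move=> i; rewrite andbC.
apply: ler_wpM2l; first exact: prodr_ge0.
apply: (@le_trans _ _ (\prod_(i <- r | P i && ~~ Q i) c)).
  by apply: ler_prod => i /andP[Pi nQi]; rewrite G_ge0 GL.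
apply: (@le_trans _ _ (\prod_(i <- r | Q i && ~~ P i) c)); last first.
  by apply: ler_prod => i /andP[Qi nPi]; rewrite c_ge0 GS.
by rewrite !big_const_seq !iter_mulr_1 ler_weXn2l.
Qed.

Lemma size_XnsubX (R : nzRingType) n : (1 < n)%N -> size ('X^n - 'X : {poly R}) = n.+1.
Proof. by move=> n_gt1; rewrite size_polyDl size_polyXn // size_polyN size_polyX ltnS. Qed.

Section MonicIrreducible.
Variable F : fieldType.
Implicit Types (f g h p q : {poly F}) (s : seq {poly F}).

Lemma irredp_eqp p q : p %= q -> irreducible_poly q -> irreducible_poly p.
Proof.
move=> pq [sq qI]; split; first by rewrite (eqp_size pq).
move=> d sd dp; apply: eqp_trans (qI d sd _) _; last by rewrite eqp_sym.
by rewrite -(eqp_dvdr _ pq).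
Qed.

Lemma irredp_dvdp_exists h : (1 < size h)%N ->
  exists p, [/\ p \is monic, irreducible_poly p & p %| h].
Proof.
have [n] := ubnP (size h); elim: n h => // n IH h; rewrite ltnS => hn h_gt1.
have [hI|hNI] := pselect (irreducible_poly h).
  have h_neq0 : lead_coef h != 0 by rewrite lead_coef_eq0 -size_poly_gt0 ltnW.
  have hh : (lead_coef h)^-1 *: h %= h by rewrite eqp_scale ?invr_eq0.
  exists ((lead_coef h)^-1 *: h); split; last by rewrite (eqp_dvdl _ hh).
    by apply/monicP; rewrite lead_coefZ mulVf.
  exact: irredp_eqp hh hI.
have [q /not_implyP[sq /not_implyP[qh /negP qNh]]] :
    exists q, ~ (size q != 1%N -> q %| h -> q %= h).
  by apply/existsNP => qI; apply: hNI.
have h_neq0 : h != 0 by rewrite -size_poly_gt0 ltnW.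
have q_neq0 : q != 0 by apply: contra_neq h_neq0 => q0; move: qh; rewrite q0 dvd0p => /eqP.
have [p [pM pI pq]] : exists p, [/\ p \is monic, irreducible_poly p & p %| q].
  apply: IH; last by rewrite ltn_neqAle eq_sym sq size_poly_gt0.
  by apply: leq_trans hn; rewrite ltn_neqAle dvdp_size_eqp // qNh dvdp_leq.
by exists p; split => //; exact: dvdp_trans qh.
Qed.

Lemma coprimep_monic_irredp p q : p \is monic -> irreducible_poly p ->
  q \is monic -> irreducible_poly q -> p != q -> coprimep p q.
Proof.
move=> pM pI qM qI; apply: contraNT; rewrite irreducible_poly_coprime // negbK.
move=> pq; have [sp _] := pI.
by rewrite -(eqp_monic pM qM) (apply_irredp qI) // neq_ltn sp orbT.
Qed.

Definition monic_irreds (s : seq {poly F}) :=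
  forall p, p \in s -> p \is monic /\ irreducible_poly p.

Lemma coprimep_prod_monic_irreds p s : p \is monic -> irreducible_poly p ->
  monic_irreds s -> p \notin s -> coprimep p (\prod_(q <- s) q).
Proof.
move=> pM pI sMI pNs; rewrite big_seq.
apply: (big_ind (coprimep p)) => [|a b|q qs]; first exact: coprimep1.
  by rewrite coprimepMr => -> ->.
have [qM qI] := sMI q qs; rewrite coprimep_monic_irredp //.
by apply: contraNneq pNs => ->.
Qed.

Lemma prod_monic_irreds_dvdp g s : uniq s -> monic_irreds s ->
  (forall q, q \in s -> q %| g) -> \prod_(q <- s) q %| g.
Proof.
elim: s => [|q s IH] /=; first by rewrite big_nil dvd1p.
move=> /andP[qNs s_uniq] qsMI qs_g; rewrite big_cons.
have sMI : monic_irreds s by move=> r rs; apply: qsMI; rewrite inE rs orbT.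
have [qM qI] := qsMI q (mem_head _ _).
rewrite Gauss_dvdp ?coprimep_prod_monic_irreds // qs_g ?mem_head //=.
by apply: IH => // r rs; apply: qs_g; rewrite inE rs orbT.
Qed.

Lemma size_prod_monic s : (forall q, q \in s -> q \is monic) ->
  (size (\prod_(q <- s) q)).-1 = (\sum_(q <- s) (size q).-1)%N.
Proof.
elim: s => [|q s IH] sM; first by rewrite !big_nil size_poly1.
have qM := sM q (mem_head _ _).
have {}sM r : r \in s -> r \is monic by move=> rs; apply: sM; rewrite inE rs orbT.
have sM' : \prod_(r <- s) r \is monic by rewrite big_seq monic_prod.
rewrite !big_cons size_monicM ?monic_neq0 // -IH //.
move: (monic_neq0 qM) (monic_neq0 sM'); rewrite -!size_poly_gt0.
by case: (size q) => // a; case: (size _) => // b _ _; rewrite addSn addnS.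
Qed.

Lemma sqfree_dvdp_prod g s : g != 0 -> uniq s -> monic_irreds s ->
  (forall p, irreducible_poly p -> ~~ (p * p %| g)) ->
  (forall p, p \is monic -> irreducible_poly p -> p %| g -> p \in s) ->
  g %| \prod_(q <- s) q.
Proof.
move=> g_neq0 s_uniq sMI g_sqfree s_full.
suff: forall h, h %| g -> h %| \prod_(q <- s) q by apply; exact: dvdpp.
move=> h; have [n] := ubnP (size h); elim: n h => // n IH h; rewrite ltnS => hn hg.
have h_neq0 : h != 0 by apply: contra_neq g_neq0 => h0; move: hg; rewrite h0 dvd0p => /eqP.
have [h_le1|h_gt1] := leqP (size h) 1.
  have /dvdp_trans -> // : h %| 1 by rewrite dvdp1 eqn_leq h_le1 size_poly_gt0.
  exact: dvd1p.
have [p [pM pI ph]] := irredp_dvdp_exists h_gt1.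
have p_neq0 := monic_neq0 pM.
have h_eq : h = (h %/ p) * p by rewrite divpK.
have pNhp : ~~ (p %| h %/ p).
  apply: contra (g_sqfree p pI) => /(dvdp_mul (dvdpp p)).
  by rewrite [p * (h %/ p)]mulrC -h_eq => /dvdp_trans; apply.
rewrite h_eq Gauss_dvdp; last by rewrite coprimep_sym irreducible_poly_coprime.
apply/andP; split; last first.
  rewrite (big_rem p) ?s_full //=; last exact: dvdp_trans ph hg.
  exact: dvdp_mulIl.
apply: IH; last by apply: dvdp_trans hg; rewrite {2}h_eq dvdp_mulIl.
have [sp _] := pI; apply: leq_trans hn.
by rewrite size_divp // ltn_subrL ltn_predRL sp size_poly_gt0.
Qed.

Lemma monic_irreds_filter s (P : pred {poly F}) :
  monic_irreds s -> monic_irreds (filter P s).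
Proof. by move=> sMI p; rewrite mem_filter => /andP[_ /sMI]. Qed.

Lemma sum_size_dvdp_le f s : f != 0 -> uniq s -> monic_irreds s ->
  (\sum_(p <- s | (p %| f)%R) (size p).-1 <= (size f).-1)%N.
Proof.
move=> f_neq0 s_uniq sMI; rewrite -big_filter -size_prod_monic; last first.
  by move=> p; rewrite mem_filter => /andP[_ /sMI[]].
rewrite -!subn1 leq_sub2r // dvdp_leq // prod_monic_irreds_dvdp ?filter_uniq //.
  exact: monic_irreds_filter.
by move=> p; rewrite mem_filter => /andP[].
Qed.
End MonicIrreducible.

Section FiniteField.
Variable F : finFieldType.
Local Notation q := #|F|.
Implicit Types (h p : {poly F}) (s : seq {poly F}).

Lemma pnat_card_finField : [pchar F].-nat q.
Proof.
have [p p_pr pc] := finPcharP F.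
by rewrite (eq_pnat _ (pcharf_eq pc)) (card_pprimeChar pc) pnatX pnat_id.
Qed.

Lemma cardX_gt1 m : (0 < m)%N -> (1 < q ^ m)%N.
Proof. by move=> m_gt0; rewrite -(expn0 q) ltn_exp2l // finNzRing_gt1. Qed.

Lemma natr_cardX_eq0 m : (0 < m)%N -> (q ^ m)%:R = 0 :> F.
Proof.
move=> m_gt0; have qm_pchar : [pchar F].-nat (q ^ m)%N by rewrite pnatX pnat_card_finField.
apply/eqP; apply: contraT; rewrite natf_neq0_pchar => /(pnat_1 qm_pchar) qm1.
by move: (cardX_gt1 m_gt0); rewrite qm1.
Qed.

Lemma expf_cardX (x : F) m : x ^+ (q ^ m) = x.
Proof. by elim: m => [|m IH]; rewrite ?expr1 // expnSr exprM IH expf_card. Qed.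

Lemma XcardX_subX_sqfree m p : (0 < m)%N -> irreducible_poly p ->
  ~~ (p * p %| 'X^(q ^ m) - 'X).
Proof.
move=> m_gt0 [sp _]; apply/negP => /dvdpP[r Er].
(* a repeated factor would divide the derivative, which is -1 *)
have : p %| ('X^(q ^ m) - 'X)^`().
  rewrite Er !derivM; apply: dvdp_add; first by rewrite mulrA dvdp_mulIr.
  by rewrite dvdp_mull // dvdp_add ?dvdp_mulIr ?dvdp_mulIl.
rewrite derivB derivXn derivX -mulr_natr -polyC_natr natr_cardX_eq0 // mulr0 sub0r.
by rewrite dvdpNr dvdp1 => /eqP sp1; rewrite sp1 in sp.
Qed.

Lemma exprcardX_comp m (r : {poly F}) : r ^+ (q ^ m) = r \Po 'X^(q ^ m).
Proof.
have qm_pchar : [pchar {poly F}].-nat (q ^ m)%N.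
  by rewrite (eq_pnat _ (@pchar_poly F)) pnatX pnat_card_finField.
elim/poly_ind: r => [|r c IH].
  by rewrite comp_poly0 expr0n gtn_eqF // expn_gt0 ltnW // finNzRing_gt1.
rewrite (exprDn_pchar _ _ qm_pchar) exprMn IH -polyC_exp expf_cardX.
by rewrite comp_polyD comp_polyM comp_polyX comp_polyC.
Qed.

Lemma qfpoly_exprcardX h (hMI : monic_irreducible_poly h) m :
  h %| 'X^(q ^ m) - 'X -> forall y : {poly %/ h with hMI}, y ^+ (q ^ m) = y.
Proof.
move=> h_dvd y.
have hM : h \is monic by case: (hMI).
have qX_fixed : in_qpoly h 'X^(q ^ m) = in_qpoly h 'X.
  apply/eqP; rewrite -subr_eq0 -rmorphB; apply/eqP/val_inj => /=.
  by rewrite (mk_monicE hMI) -Pdiv.IdomainMonic.modpE //; apply/modp_eq0P.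
have -> : y = in_qpoly h (val y).
  by apply: val_inj => /=; rewrite Pdiv.CommonRing.rmodp_small // size_mk_monic.
rewrite -rmorphXn /= exprcardX_comp in_qpoly_comp_horner qX_fixed.
by rewrite -in_qpoly_comp_horner comp_polyXr.
Qed.

Lemma size_irredp_dvd_XcardX h m :
  (0 < m)%N -> h \is monic -> irreducible_poly h ->
  h %| 'X^(q ^ m) - 'X -> ((size h).-1 <= m)%N.
Proof.
move=> m_gt0 hM hI h_dvd; have hMI : monic_irreducible_poly h by split.
(* all q^(deg h) elements of the field F[X]/(h) are roots of X^(q^m) - X *)
pose K := {poly %/ h with hMI}.
have P_neq0 : 'X^(q ^ m) - 'X != 0 :> {poly K}.
  by rewrite -size_poly_eq0 size_XnsubX // cardX_gt1.
have := max_poly_roots P_neq0 (rs := enum K).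
rewrite enum_uniq -cardE card_qfpoly size_XnsubX ?cardX_gt1 // ltnS.
have -> : all (root ('X^(q ^ m) - 'X)) (enum K).
  by apply/allP => y _; rewrite /root !hornerE qfpoly_exprcardX // subrr.
by move=> /(_ isT isT); rewrite leq_exp2l // finNzRing_gt1.
Qed.

Lemma XcardX_subX_dvdp_prod m s : (0 < m)%N -> uniq s -> monic_irreds s ->
  (forall p, p \is monic -> irreducible_poly p -> ((size p).-1 <= m)%N -> p \in s) ->
  'X^(q ^ m) - 'X %| \prod_(p <- s) p.
Proof.
move=> m_gt0 s_uniq sMI s_full; apply: sqfree_dvdp_prod => //.
- by rewrite -size_poly_eq0 size_XnsubX // cardX_gt1.
- by move=> p; apply: XcardX_subX_sqfree.
- by move=> p pM pI /(size_irredp_dvd_XcardX m_gt0 pM pI); apply: s_full.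
Qed.

Lemma cardX_le_sum_size m s : (0 < m)%N -> uniq s -> monic_irreds s ->
  (forall p, p \is monic -> irreducible_poly p -> ((size p).-1 <= m)%N -> p \in s) ->
  (q ^ m <= \sum_(p <- s | ((size p).-1 <= m)%N) (size p).-1)%N.
Proof.
move=> m_gt0 s_uniq sMI s_full; rewrite -big_filter; set t := filter _ s.
have tMI : monic_irreds t by exact: monic_irreds_filter.
rewrite -size_prod_monic; last by move=> p /tMI[].
have -> : (q ^ m)%N = (size ('X^(q ^ m) - 'X : {poly F})).-1.
  by rewrite size_XnsubX ?cardX_gt1.
rewrite -!subn1 leq_sub2r // dvdp_leq ?XcardX_subX_dvdp_prod ?filter_uniq //.
  by rewrite monic_neq0 // big_seq monic_prod // => p /tMI[].
by move=> p pM pI pm; rewrite mem_filter pm s_full.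
Qed.
End FiniteField.

Definition monic_irreds_upto (F : finFieldType) (N : nat) : seq {poly F} :=
  [seq p <- [seq val x | x <- npoly_enum F N] | (p \is monic) && irreducibleb p].

Section EnumMonicIrreducible.
Variables (F : finFieldType) (N : nat).

Lemma monic_irreds_upto_uniq : uniq (monic_irreds_upto F N).
Proof. by rewrite filter_uniq // map_inj_uniq ?npoly_enum_uniq //; exact: val_inj. Qed.

Lemma mem_monic_irreds_upto p :
  (p \in monic_irreds_upto F N) = [&& p \is monic, irreducibleb p & (size p <= N)%N].
Proof.
rewrite mem_filter andbA; congr (_ && _).
apply/mapP/idP => [[x _ ->]|sp]; first exact: size_npoly.
by exists (npolyp N p); [exact: mem_npoly_enum | rewrite /= npolypK].
Qed.

Lemma monic_irreds_upto_monic_irreds : monic_irreds (monic_irreds_upto F N).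
Proof.
by move=> p; rewrite mem_monic_irreds_upto => /and3P[pM /irreducibleP pI _].
Qed.
End EnumMonicIrreducible.

Local Open Scope classical_set_scope.

Lemma mem_monic_irr_set (F : finFieldType) (P : pred {poly F}) p :
  (p \in [set q | monic_irr q /\ P q]) = [&& p \is monic, irreducibleb p & P p].
Proof.
apply/idP/and3P => [/set_mem[[pM /irreducibleP pI] Pp] | [pM /irreducibleP pI Pp]] //.
exact: mem_set.
Qed.

Lemma fsbig_monic_irr (R : comPzSemiRingType) (F : finFieldType) N
    (P : pred {poly F}) (G : {poly F} -> R) :
  (forall p, p \is monic -> P p -> (size p <= N)%N) ->
  \big[*%R/1]_(p \in [set q | monic_irr q /\ P q]) G p =
  \prod_(p <- monic_irreds_upto F N | P p) G p.
Proof.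
move=> P_small; set A := [set q | _].
transitivity (\prod_(p <- monic_irreds_upto F N | p \in A) G p).
  rewrite [RHS]bigfs ?monic_irreds_upto_uniq ?set_mem_set //.
  move=> p; rewrite mem_monic_irr_set mem_monic_irreds_upto => /and3P[pM pI Pp].
  by rewrite pM pI P_small.
rewrite big_seq_cond [RHS]big_seq_cond; apply: eq_bigl => p.
rewrite mem_monic_irr_set mem_monic_irreds_upto.
by case: (p \is monic); case: (irreducibleb p).
Qed.

Section Efac.
Variables (R : realType) (F : finFieldType).
Implicit Type p : {poly F}.

Lemma efac_ge1 p : 1 <= efac R p.
Proof. by rewrite /efac lerDl invr_ge0 ler0n. Qed.

Lemma ler_efac p (p' : {poly F}) : (size p <= size p')%N -> efac R p' <= efac R p.
Proof.
move=> le_pp'; have q_gt0 : (0 < #|F|)%N by rewrite ltnW // finNzRing_gt1.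
rewrite /efac /pnorm lerD2l lef_pV2 ?posrE ?ltr0n ?expn_gt0 ?q_gt0 // ler_nat.
by rewrite leq_pexp2l // -!subn1 leq_sub2r.
Qed.
End Efac.


Theorem lemma1 (R : realType) (F : finFieldType) (f : {poly F}) (m : nat) :
  f != 0 -> (1 <= m)%N -> ((size f).-1 <= #|F| ^ m)%N ->
  E R f <= Pm R F m.
Proof.
move=> f_neq0 m_gt0 f_small.
set N := maxn (size f) m.+1; set r := monic_irreds_upto F N.
have r_uniq : uniq r := monic_irreds_upto_uniq F N.
have rMI : monic_irreds r := @monic_irreds_upto_monic_irreds F N.
have small_N (p : {poly F}) : ((size p).-1 <= m)%N -> (size p <= N)%N.
  by rewrite leq_predLR /N leq_max => ->; rewrite orbT.
have r_full (p : {poly F}) :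
    p \is monic -> irreducible_poly p -> ((size p).-1 <= m)%N -> p \in r.
  by move=> pM /irreducibleP pI /small_N pN; rewrite mem_monic_irreds_upto pM pI.
rewrite /E /Pm (fsbig_monic_irr (N := N)) => [|p pM pf]; last first.
  by rewrite /N leq_max (dvdp_leq f_neq0 pf).
rewrite (fsbig_monic_irr (N := N)) => [|p pM]; last exact: small_N.
apply: (ler_prod_split (c := efac R ('X^m : {poly F}))) => [|||p _ gt_pm|p le_pm _].
- exact: efac_ge1.
- by move=> p; apply: le_trans (efac_ge1 R p).
- apply: (count_large_le_count_small m_gt0 (sum_size_dvdp_le f_neq0 r_uniq rMI)).
  exact: leq_trans f_small (cardX_le_sum_size m_gt0 r_uniq rMI r_full).
- by apply: ler_efac; rewrite size_polyXn ltnW // ltnNge -leq_predLR.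
- by apply: ler_efac; rewrite size_polyXn -leq_predLR.
Qed.
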